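(* Let $\Pi=((p_1,\dots,p_n),(P_1,\dots,P_n),(d_1,\dots,d_n))$ be an $n$-pod. If $\Pi$ has a collinearity bond, then $p_1,\dots,p_n$ are collinear or $P_1,\dots,P_n$ are collinear (or both). Conversely, if $p_1,\dots,p_n$ are collinear or $P_1,\dots,P_n$ are collinear (or both), then $\Pi$ has a collinearity bond.
   Context: An $n$-pod is a triple of platform points $p_i\in\mathbb{R}^3$, base points $P_i\in\mathbb{R}^3$ and leg lengths $d_i\ge0$. Write a direct isometry as $v\mapsto Mv+y$ ($M\in SO(3)$) and put $x=-M^ty$, $r=\langle y,y\rangle$. It corresponds to $(h:M:x:y:r)=(1:m_{11}:\dots:m_{33}:x_1:x_2:x_3:y_1:y_2:y_3:r)\in\mathbb{P}^{16}_{\mathbb{C}}$. $X$ is the complex Zariski closure of all such points. Throughout, $\langle u,u'\rangle=u^tu'$ is the complex bilinear form on $\mathbb{C}^3$. Let $l_i$ be the linear form $$-d_i^2h+(\langle p_i,p_i\rangle+\langle P_i,P_i\rangle)h+r-2\langle p_i,x\rangle-2\langle y,P_i\rangle-2\langle Mp_i,P_i\rangle.$$ Define: - $K_\Pi=X\cap\{l_1=\dots=l_n=0\}$; - $B=X\cap\{h=0\}$; - the set of bonds $B_\Pi=K_\Pi\cap B$. A collinearity point is a point $(0:M:x:y:r)\in B$ with $M=0$ and exactly one of $x,y$ equal to zero. A collinearity bond is a bond which is a collinearity point. *)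

From mathcomp Require Import all_boot all_algebra.
From mathcomp Require Import complex.
From mathcomp Require Import reals.
From mathcomp Require Import mpoly.
Set Implicit Arguments. Unset Strict Implicit. Unset Printing Implicit Defensive.
Import GRing.Theory Num.Theory.
Local Open Scope ring_scope.

Section Pods.
Variable R : realType.
Local Notation C := (R[i]).

Definition cplx (a : R) : C := (a%:C)%C.
Definition cvec (u : 'cV[R]_3) : 'cV[C]_3 := map_mx cplx u.

Definition bil (F : pzRingType) (u u' : 'cV[F]_3) : F := (u^T *m u') 0 0.

(* A point of P^16 is represented by a nonzero vector of C^17 with
   coordinates (h : m11 m12 m13 m21 ... m33 : x1 x2 x3 : y1 y2 y3 : r),
   i.e. index 0 = h, 1+3i+j = m_{i+1,j+1}, 10+i = x_{i+1}, 13+i = y_{i+1}, 16 = r. *)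
Definition hc (v : 'I_17 -> C) : C := v (inord 0).
Definition Mc (v : 'I_17 -> C) : 'M[C]_3 := \matrix_(i < 3, j < 3) v (inord (1 + 3 * i + j)).
Definition xc (v : 'I_17 -> C) : 'cV[C]_3 := \col_(i < 3) v (inord (10 + i)).
Definition yc (v : 'I_17 -> C) : 'cV[C]_3 := \col_(i < 3) v (inord (13 + i)).
Definition rc (v : 'I_17 -> C) : C := v (inord 16).

(* v is (a representative with h = 1 of) the point (1 : M : x : y : r)
   attached to a direct isometry u |-> M u + y, M in SO(3), y in R^3,
   x = - M^t y, r = <y,y>. *)
Definition isometry_point (v : 'I_17 -> C) : Prop :=
  exists (M : 'M[R]_3) (y : 'cV[R]_3),
    M^T *m M = 1%:M /\ \det M = 1 /\
    hc v = 1 /\ Mc v = map_mx cplx M /\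
    xc v = cvec (- (M^T *m y)) /\
    yc v = cvec y /\ rc v = cplx (bil y y).

Definition homogeneous (p : {mpoly C[17]}) : Prop :=
  exists d : nat, forall m, m \in msupp p -> mdeg m = d.

(* X = complex (projective) Zariski closure of the isometry points:
   common zero locus (in P^16) of all homogeneous polynomials vanishing
   on all isometry points. *)
Definition in_X (v : 'I_17 -> C) : Prop :=
  (exists k, v k != 0) /\
  forall p : {mpoly C[17]}, homogeneous p ->
    (forall w, isometry_point w -> p.@[w] = 0) -> p.@[v] = 0.

Definition lform (p P : 'cV[R]_3) (d : R) (v : 'I_17 -> C) : C :=
  - cplx (d ^+ 2) * hc v + cplx (bil p p + bil P P) * hc v + rc v
  - 2 * bil (cvec p) (xc v) - 2 * bil (yc v) (cvec P)
  - 2 * bil (Mc v *m cvec p) (cvec P).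

Definition in_K (n : nat) (p P : 'I_n -> 'cV[R]_3) (d : 'I_n -> R) v : Prop :=
  in_X v /\ forall i, lform (p i) (P i) (d i) v = 0.

Definition in_B v : Prop := in_X v /\ hc v = 0.

Definition is_bond (n : nat) (p P : 'I_n -> 'cV[R]_3) (d : 'I_n -> R) v : Prop :=
  in_K p P d v /\ in_B v.

Definition collinearity_point v : Prop :=
  in_B v /\ Mc v = 0 /\ ((xc v == 0) != (yc v == 0)).

Definition collinearity_bond (n : nat) (p P : 'I_n -> 'cV[R]_3) (d : 'I_n -> R) v : Prop :=
  is_bond p P d v /\ collinearity_point v.

Definition collinear (n : nat) (q : 'I_n -> 'cV[R]_3) : Prop :=
  exists (a u : 'cV[R]_3), u != 0 /\ forall i, exists t : R, q i = a + t *: u.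

End Pods.

(* On B the linear conditions read r = 2 <p_i, x> + 2 <y, P_i>, and the quadrics
   <x, x> = h r, <y, y> = h r vanishing on X make x and y isotropic. So for a
   collinearity bond with, say, y = 0, the value <p_i, x> is independent of i for an
   isotropic x = a + i b != 0, i.e. a _|_ b, |a| = |b| != 0; then every p_i lies on the
   line through a fixed point with direction a x b. Conversely a line with direction u
   gives the isotropic vector x = |u| e + i (u x e), e _|_ u, against which all its
   points have the same product.
   The delicate point is that (0 : 0 : x : 0 : r) lies on X. The Euler-Rodrigues
   parametrisation gives a polynomial family of points which, at real quaternions of
   norm N != 0, are N^2 times isometry points; so a homogeneous polynomial vanishing
   on the isometry points vanishes on a Zariski dense set of parameters, hence on the
   whole family, and at the (complex, norm 0) quaternion 0 + x, with a suitable
   translation, the family degenerates to a nonzero multiple of the wanted point. *)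
From mathcomp Require Import all_boot all_algebra.
From mathcomp Require Import complex reals mpoly.
From mathcomp Require Import ring zify.
Set Implicit Arguments. Unset Strict Implicit. Unset Printing Implicit Defensive.
Import GRing.Theory Num.Theory.
Local Open Scope ring_scope.

Section BilinearForm.
Variable F : comPzRingType.
Implicit Types (u v w : 'cV[F]_3) (a : F).

Definition col3 (a0 a1 a2 : F) : 'cV[F]_3 :=
  \col_i match nat_of_ord i with 0 => a0 | 1 => a1 | _ => a2 end.

Lemma col3E u : u = col3 (u 0 0) (u 1 0) (u 2 0).
Proof.
apply/matrixP => i j; rewrite [j]ord1 !mxE.
by case: i => [[|[|[|?]]] ?] //=; congr (u _ _); apply: val_inj.
Qed.

Lemma bilE u v : bil u v = u 0 0 * v 0 0 + u 1 0 * v 1 0 + u 2 0 * v 2 0.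
Proof.
rewrite /bil mxE !big_ord_recr big_ord0 /= !mxE add0r.
by congr (_ * _ + _ * _ + _ * _); congr (_ _ _); apply: val_inj.
Qed.

Lemma bilC u v : bil u v = bil v u.
Proof. by rewrite !bilE; ring. Qed.

Lemma bil0l v : bil 0 v = 0.
Proof. by rewrite bilE !mxE; ring. Qed.

Lemma bil0r u : bil u 0 = 0.
Proof. by rewrite bilC bil0l. Qed.

Lemma bilDl u v w : bil (u + v) w = bil u w + bil v w.
Proof. by rewrite !bilE !mxE; ring. Qed.

Lemma bilNl u v : bil (- u) v = - bil u v.
Proof. by rewrite !bilE !mxE; ring. Qed.

Lemma bilBl u v w : bil (u - v) w = bil u w - bil v w.
Proof. by rewrite bilDl bilNl. Qed.

Lemma bilZl a u v : bil (a *: u) v = a * bil u v.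
Proof. by rewrite !bilE !mxE; ring. Qed.

Lemma bilZr a u v : bil u (a *: v) = a * bil u v.
Proof. by rewrite bilC bilZl bilC. Qed.

Lemma bil_mulmx (A : 'M[F]_3) u v : bil (A *m u) (A *m v) = bil u (A^T *m A *m v).
Proof. by rewrite /bil trmx_mul !mulmxA. Qed.

Definition cross u v : 'cV[F]_3 :=
  col3 (u 1 0 * v 2 0 - u 2 0 * v 1 0) (u 2 0 * v 0 0 - u 0 0 * v 2 0)
       (u 0 0 * v 1 0 - u 1 0 * v 0 0).

Lemma bil_crossl u v : bil (cross u v) u = 0.
Proof. by rewrite bilE !mxE /=; ring. Qed.

Lemma bil_crossr u v : bil (cross u v) v = 0.
Proof. by rewrite bilE !mxE /=; ring. Qed.

Lemma bil_cross_cross u v :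
  bil (cross u v) (cross u v) = bil u u * bil v v - bil u v ^+ 2.
Proof. by rewrite !bilE !mxE /=; ring. Qed.

Lemma cross_decomposition u v w :
  (bil u u * bil v v - bil u v ^+ 2) *: w =
  (bil v v * bil w u - bil u v * bil w v) *: u
  + (bil u u * bil w v - bil u v * bil w u) *: v + bil w (cross u v) *: cross u v.
Proof.
apply/matrixP => i j; rewrite [j]ord1 {1}[w]col3E [u in RHS]col3E [v in RHS]col3E.
rewrite !mxE !bilE !mxE /=.
by case: i => [[|[|[|?]]] ?] //=; ring.
Qed.
End BilinearForm.

Lemma map_bil (F G : comPzRingType) (f : {rmorphism F -> G}) (u v : 'cV[F]_3) :
  f (bil u v) = bil (map_mx f u) (map_mx f v).
Proof. by rewrite /bil map_trmx -map_mxM [RHS]mxE. Qed.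

Lemma exists_orthogonal (F : idomainType) (u : 'cV[F]_3) :
  exists e : 'cV[F]_3, e != 0 /\ bil e u = 0.
Proof.
have [u1|u1] := eqVneq (u 1 0) 0.
  exists (col3 0 1 0); split; last by rewrite bilE !mxE /= u1; ring.
  by apply/negP => /eqP/matrixP/(_ 1 0); rewrite !mxE /= => /eqP; rewrite oner_eq0.
exists (col3 0 (u 2 0) (- u 1 0)); split; last by rewrite bilE !mxE /=; ring.
apply/negP => /eqP/matrixP/(_ 2 0); rewrite !mxE /= => /eqP.
by rewrite oppr_eq0 (negbTE u1).
Qed.

Section RealBilinearForm.
Variable R : realDomainType.
Implicit Types u : 'cV[R]_3.

Lemma bil_sqr u : bil u u = \sum_i u i 0 ^+ 2.
Proof. by rewrite /bil mxE; apply: eq_bigr => i _; rewrite mxE expr2. Qed.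

Lemma bil_ge0 u : 0 <= bil u u.
Proof. by rewrite bil_sqr sumr_ge0 // => i _; exact: sqr_ge0. Qed.

Lemma bil_eq0 u : (bil u u == 0) = (u == 0).
Proof.
apply/idP/eqP => [|->]; last by rewrite bil0l.
rewrite bil_sqr psumr_eq0 => [/allP u0|i _]; last exact: sqr_ge0.
apply/matrixP => i j; rewrite [j]ord1 mxE.
by apply/eqP; rewrite -sqrf_eq0; exact: u0 (mem_index_enum i).
Qed.
End RealBilinearForm.

Section ComplexVectors.
Variable R : realType.
Local Notation C := R[i].
Local Open Scope complex_scope.
Implicit Types (a b : 'cV[R]_3) (x : 'cV[C]_3).

Definition cvec2 a b : 'cV[C]_3 := \col_k (a k 0 +i* b k 0).

Definition conjv x : 'cV[C]_3 := map_mx conjc x.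

Lemma cvec2_surj x : exists a b, x = cvec2 a b.
Proof.
exists (map_mx (@complex.Re R) x), (map_mx (@complex.Im R) x).
by apply/matrixP => i j; rewrite [j]ord1 !mxE; case: (x i 0).
Qed.

Lemma cvec_cvec2 a : cvec a = cvec2 a 0.
Proof. by apply/matrixP => i j; rewrite [j]ord1 !mxE. Qed.

Lemma conjv_cvec2 a b : conjv (cvec2 a b) = cvec2 a (- b).
Proof. by apply/matrixP => i j; rewrite !mxE. Qed.

Lemma cvec2_eq0 a b : (cvec2 a b == 0) = (a == 0) && (b == 0).
Proof.
apply/eqP/andP => [/matrixP ab0|[/eqP -> /eqP ->]]; last first.
  by apply/matrixP => i j; rewrite !mxE.
by split; apply/eqP/matrixP => i j; have /eqP := ab0 i j;
  rewrite [j]ord1 !mxE eq_complex /= => /andP [/eqP ? /eqP ?].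
Qed.

Lemma bil_cvec2 a b a' b' :
  bil (cvec2 a b) (cvec2 a' b') = (bil a a' - bil b b') +i* (bil a b' + bil b a').
Proof.
rewrite !bilE !mxE; apply/eqP; rewrite eq_complex /=.
by apply/andP; split; apply/eqP; ring.
Qed.

Lemma bil_cvec2_eq0 a b :
  bil (cvec2 a b) (cvec2 a b) = 0 <-> bil a a = bil b b /\ bil a b = 0.
Proof.
rewrite bil_cvec2 [bil b a]bilC -mulr2n; split => [/eqP|[-> ->]].
  rewrite eq_complex /= subr_eq0 mulrn_eq0 /= => /andP [/eqP -> /eqP ->] //.
by rewrite subrr mul0rn.
Qed.

Lemma collinear_of_isotropic n (q : 'I_n -> 'cV[R]_3) x (c : C) :
  bil x x = 0 -> x != 0 -> (forall i, bil (cvec (q i)) x = c) -> collinear q.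
Proof.
have [a [b ->]] := cvec2_surj x.
rewrite cvec2_eq0 => /bil_cvec2_eq0 [ab ab0] x0 hq.
have a0 : a != 0.
  apply: contraNneq x0 => a0; move/eqP: ab; rewrite a0 bil0l eq_sym bil_eq0 => /eqP ->.
  by rewrite eqxx.
set L := bil a a; have L0 : L != 0 by rewrite bil_eq0.
have qab i : bil (q i) a = complex.Re c /\ bil (q i) b = complex.Im c.
  by have := hq i; rewrite cvec_cvec2 bil_cvec2 !bil0l subr0 addr0 => <-.
pose base := (complex.Re c / L) *: a + (complex.Im c / L) *: b.
exists base, (cross a b); split.
  by rewrite -bil_eq0 bil_cross_cross -ab ab0 expr0n subr0 mulf_neq0.
move=> i; set w := q i - base.
have [qa qb] := qab i.
have wa : bil w a = 0.
  by rewrite bilBl bilDl !bilZl [bil b a]bilC ab0 qa -/L; field.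
have wb : bil w b = 0.
  by rewrite bilBl bilDl !bilZl -ab ab0 qb -/L; field.
have := cross_decomposition a b w; rewrite wa wb -ab ab0 -/L.
rewrite expr0n !mulr0 !subr0 !scale0r !add0r => wE.
exists (bil w (cross a b) / (L * L)).
have -> : q i = base + w by rewrite /w addrC subrK.
congr (_ + _); apply: (scalerI (mulf_neq0 L0 L0)).
by rewrite wE scalerA mulrC divfK // mulf_neq0.
Qed.

Lemma isotropic_of_collinear n (q : 'I_n -> 'cV[R]_3) : collinear q ->
  exists x (c : C),
    [/\ bil x x = 0, bil x (conjv x) != 0 & forall i, bil (cvec (q i)) x = c].
Proof.
case=> a [u [u0 hq]].
have [e [e0 eu]] := exists_orthogonal u.
pose s := Num.sqrt (bil u u); pose f := cross u e.
have s2 : s ^+ 2 = bil u u by rewrite sqr_sqrtr // bil_ge0.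
have ff : bil (s *: e) (s *: e) = bil f f.
  by rewrite bil_cross_cross bilZl bilZr mulrA -expr2 s2 bilC eu expr0n subr0.
have ef : bil (s *: e) f = 0 by rewrite bilC bilZr bil_crossr mulr0.
have uf : bil u f = 0 by rewrite bilC bil_crossl.
have ue : bil u (s *: e) = 0 by rewrite bilZr bilC eu mulr0.
exists (cvec2 (s *: e) f), (bil (cvec a) (cvec2 (s *: e) f)); split.
- exact/bil_cvec2_eq0.
- rewrite conjv_cvec2 bil_cvec2 eq_complex negb_and /= [bil f (- f)]bilC bilNl.
  rewrite opprK -ff -mulr2n mulrn_eq0 /= ff bil_cross_cross bilC eu expr0n subr0.
  by rewrite mulf_neq0 // bil_eq0.
- move=> i; have [t ->] := hq i; rewrite !cvec_cvec2 !bil_cvec2 !bil0l !subr0 !addr0.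
  by rewrite !bilDl !bilZl ue uf !mulr0 !addr0.
Qed.
End ComplexVectors.

Definition mkpoint (F : Type) (h : F) (M : 'M[F]_3) (x y : 'cV[F]_3) (r : F)
  (k : 'I_17) : F :=
  if (k : nat) == 0 then h
  else if (k < 10)%N then M (inord ((k - 1) %/ 3)) (inord ((k - 1) %% 3))
  else if (k < 13)%N then x (inord (k - 10)) ord0
  else if (k < 16)%N then y (inord (k - 13)) ord0 else r.

Lemma mkpoint_map (F G : Type) (f : F -> G) h M x y r k :
  f (mkpoint h M x y r k) =
  mkpoint (f h) (map_mx f M) (map_mx f x) (map_mx f y) (f r) k.
Proof. by rewrite /mkpoint; repeat case: ifP => _; rewrite ?mxE. Qed.

Lemma mkpoint_scale (F : pzRingType) (c : F) h M x y r k :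
  c * mkpoint h M x y r k = mkpoint (c * h) (c *: M) (c *: x) (c *: y) (c * r) k.
Proof. by rewrite /mkpoint; repeat case: ifP => _; rewrite ?mxE. Qed.

Section Coordinates.
Variable R : realType.
Local Notation C := R[i].
Implicit Types (h r : C) (M : 'M[C]_3) (x y : 'cV[C]_3).

Lemma hc_mkpoint h M x y r : hc (mkpoint h M x y r) = h.
Proof. by rewrite /hc /mkpoint inordK. Qed.

Lemma rc_mkpoint h M x y r : rc (mkpoint h M x y r) = r.
Proof. by rewrite /rc /mkpoint inordK. Qed.

Lemma Mc_mkpoint h M x y r : Mc (mkpoint h M x y r) = M.
Proof.
apply/matrixP => -[i Hi] [j Hj]; rewrite !mxE /mkpoint inordK /=; last by lia.
have -> : (1 + 3 * i + j < 10)%N by lia.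
have -> : ((1 + 3 * i + j - 1) %/ 3 = i)%N by lia.
have -> : ((1 + 3 * i + j - 1) %% 3 = j)%N by lia.
by congr (M _ _); apply: val_inj; rewrite /= inordK.
Qed.

Lemma xc_mkpoint h M x y r : xc (mkpoint h M x y r) = x.
Proof.
apply/matrixP => -[i Hi] j; rewrite [j]ord1 !mxE /mkpoint inordK /=; last by lia.
have -> : (10 + i < 13)%N by lia.
have -> : (10 + i - 10 = i)%N by lia.
by congr (x _ _); apply: val_inj; rewrite /= inordK.
Qed.

Lemma yc_mkpoint h M x y r : yc (mkpoint h M x y r) = y.
Proof.
apply/matrixP => -[i Hi] j; rewrite [j]ord1 !mxE /mkpoint inordK /=; last by lia.
have -> : (13 + i < 16)%N by lia.
have -> : (13 + i - 13 = i)%N by lia.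
by congr (y _ _); apply: val_inj; rewrite /= inordK.
Qed.

Lemma bil_cvec (u u' : 'cV[R]_3) : bil (cvec u) (cvec u') = cplx (bil u u').
Proof. by rewrite /cvec /cplx -(map_bil (real_complex R)). Qed.

Lemma exists_coord_neq0 (v : 'I_17 -> C) : xc v != 0 \/ yc v != 0 -> exists k, v k != 0.
Proof.
case: (pickP (fun k => v k != 0)) => [k vk _|v0]; first by exists k.
suff [-> ->] : xc v = 0 /\ yc v = 0 by rewrite eqxx; case.
by split; apply/matrixP => i j; rewrite !mxE; apply/eqP/negbFE/v0.
Qed.

Lemma map_cplx_trmx (M : 'M[R]_3) : map_mx (@cplx R) M^T = (map_mx (@cplx R) M)^T.
Proof. by apply/matrixP => i j; rewrite !mxE. Qed.

Lemma cvec_mulmx (M : 'M[R]_3) (u : 'cV[R]_3) :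
  cvec (M *m u) = map_mx (@cplx R) M *m cvec u.
Proof.
apply/matrixP => i j; rewrite !mxE /cplx rmorph_sum; apply: eq_bigr => k _.
by rewrite !mxE rmorphM.
Qed.

Lemma cvecN (u : 'cV[R]_3) : cvec (- u) = - cvec u.
Proof. by apply/matrixP => i j; rewrite !mxE /cplx rmorphN. Qed.

Lemma isometry_point_isotropic (w : 'I_17 -> C) : isometry_point w ->
  bil (xc w) (xc w) = hc w * rc w /\ bil (yc w) (yc w) = hc w * rc w.
Proof.
case=> M [y [MM [_ [-> [_ [-> [-> ->]]]]]]]; rewrite mul1r !bil_cvec; split => //.
rewrite bilNl bilC bilNl opprK bil_mulmx trmxK mulmx1C //.
by rewrite mul1mx.
Qed.

Definition isotropy_poly (off : nat) : {mpoly C[17]} :=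
  \sum_(i < 3) 'X_(inord (off + i)) ^+ 2 - 'X_(inord 0) * 'X_(inord 16).

Lemma isotropy_poly_homogeneous off : homogeneous (isotropy_poly off).
Proof.
have X1 (i : 'I_17) : ('X_i : {mpoly C[17]}) \is [in C[17], 1.-homog].
  by rewrite dhomogX; apply/eqP; apply: mdeg1.
exists 2%N; apply: dhomog_mf; rewrite rpredB //.
  by apply: rpred_sum => i _; exact: (dhomogMn 2 (X1 _)).
exact: (dhomogM (X1 _) (X1 _)).
Qed.

Lemma isotropy_poly_eval off (v : 'I_17 -> C) :
  (isotropy_poly off).@[v] = \sum_(i < 3) v (inord (off + i)) ^+ 2 - hc v * rc v.
Proof.
rewrite /isotropy_poly mevalB mevalM !mevalXU raddf_sum /=; congr (_ - _).
by apply: eq_bigr => i _; rewrite rmorphXn /= mevalXU.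
Qed.

Lemma sum_sqr_xc (v : 'I_17 -> C) :
  \sum_(i < 3) v (inord (10 + i)) ^+ 2 = bil (xc v) (xc v).
Proof. by rewrite /bil mxE; apply: eq_bigr => i _; rewrite !mxE expr2. Qed.

Lemma sum_sqr_yc (v : 'I_17 -> C) :
  \sum_(i < 3) v (inord (13 + i)) ^+ 2 = bil (yc v) (yc v).
Proof. by rewrite /bil mxE; apply: eq_bigr => i _; rewrite !mxE expr2. Qed.

Lemma in_X_isotropic (v : 'I_17 -> C) : in_X v ->
  bil (xc v) (xc v) = hc v * rc v /\ bil (yc v) (yc v) = hc v * rc v.
Proof.
case=> _ vX; have isoX off := vX _ (isotropy_poly_homogeneous off).
rewrite -sum_sqr_xc -sum_sqr_yc; split; apply/eqP; rewrite -subr_eq0 -isotropy_poly_eval.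
  apply/eqP/isoX => w /isometry_point_isotropic [wx _].
  by rewrite isotropy_poly_eval sum_sqr_xc wx subrr.
apply/eqP/isoX => w /isometry_point_isotropic [_ wy].
by rewrite isotropy_poly_eval sum_sqr_yc wy subrr.
Qed.
End Coordinates.

Lemma meval_scale_homog (K : comNzRingType) n (p : {mpoly K[n]}) d :
  (forall m, m \in msupp p -> mdeg m = d) ->
  forall (c : K) (v : 'I_n -> K), p.@[fun i => c * v i] = c ^+ d * p.@[v].
Proof.
move=> pd c v; rewrite !mevalE big_distrr; apply: eq_big_seq => m /pd <-.
under eq_bigr do rewrite exprMn.
rewrite big_split /= mdegE mulrCA; congr (_ * _).
by rewrite (big_morph (fun k => c ^+ k) (exprD c) (expr0 c)).
Qed.

Section PolynomialFunctions.
Variable K : numFieldType.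

Definition ispoly (f : K -> K) := exists q : {poly K}, forall w, f w = q.[w].

Lemma ispoly_cst c : ispoly (fun=> c).
Proof. by exists c%:P => w; rewrite hornerC. Qed.

Lemma ispoly_id : ispoly id.
Proof. by exists 'X => w; rewrite hornerX. Qed.

Lemma ispolyD f g : ispoly f -> ispoly g -> ispoly (fun w => f w + g w).
Proof. by move=> [p fp] [q gq]; exists (p + q) => w; rewrite hornerD fp gq. Qed.

Lemma ispolyM f g : ispoly f -> ispoly g -> ispoly (fun w => f w * g w).
Proof. by move=> [p fp] [q gq]; exists (p * q) => w; rewrite hornerM fp gq. Qed.

Lemma ispolyX f k : ispoly f -> ispoly (fun w => f w ^+ k).
Proof. by move=> [p fp]; exists (p ^+ k) => w; rewrite horner_exp fp. Qed.

Lemma ispoly_big (op : K -> K -> K) (idx : K) (I : Type) (s : seq I) (F : I -> K -> K) :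
  ispoly (fun=> idx) ->
  (forall f g, ispoly f -> ispoly g -> ispoly (fun w => op (f w) (g w))) ->
  (forall i, ispoly (F i)) -> ispoly (fun w => \big[op/idx]_(i <- s) F i w).
Proof.
move=> p_idx p_op pF; elim: s => [|i s IHs].
  by have [q qE] := p_idx; exists q => w; rewrite big_nil.
by have [q qE] := p_op _ _ (pF i) IHs; exists q => w; rewrite big_cons.
Qed.

Lemma ispoly_meval n (p : {mpoly K[n]}) (v : K -> 'I_n -> K) :
  (forall i, ispoly (v^~ i)) -> ispoly (fun w => p.@[v w]).
Proof.
move=> pv; have [q qE] : ispoly (fun w => \sum_(m <- msupp p) p@_m * \prod_i v w i ^+ m i).
  apply: ispoly_big (ispoly_cst 0) ispolyD _ => m; apply: ispolyM (ispoly_cst _) _.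
  by apply: ispoly_big (ispoly_cst 1) ispolyM _ => i; exact: ispolyX.
by exists q => w; rewrite mevalE qE.
Qed.

Lemma ispoly_nat_roots f : ispoly f -> (forall m, f m.+1%:R = 0) -> forall w, f w = 0.
Proof.
case=> q fq f0 w; rewrite fq.
suff -> : q = 0 by rewrite horner0.
apply: (@roots_geq_poly_eq0 _ q [seq m.+1%:R | m <- iota 0 (size q)]).
- by apply/allP => x /mapP [m _ ->]; rewrite /root -fq f0.
- by rewrite map_inj_uniq ?iota_uniq // => a b /eqP; rewrite eqr_nat => /eqP [].
- by rewrite size_map size_iota.
Qed.

Lemma meval_eq0_of_grid n (p : {mpoly K[n]}) :
  (forall m : 'I_n -> nat, p.@[fun i => (m i).+1%:R] = 0) -> forall z, p.@[z] = 0.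
Proof.
move=> p0.
suff grid k z : (forall i : 'I_n, (k <= i)%N -> exists m, z i = m.+1%:R) -> p.@[z] = 0.
  by move=> z; apply: (grid n) => i; rewrite leqNgt ltn_ord.
elim: k z => [|k IHk] z zk.
  have [m zm] := fin_all_exists (fun i => zk i (leq0n i)).
  by rewrite -(p0 m); apply: meval_eq => i; rewrite zm.
have [kn|nk] := ltnP k n; last by apply: IHk => i ki; have := ltn_ord i; lia.
pose j := Ordinal kn; pose zj w i := if i == j then w else z i.
have -> : p.@[z] = p.@[zj (z j)] by apply: meval_eq => i; rewrite /zj; case: eqP => // ->.
apply: (@ispoly_nat_roots (fun w => p.@[zj w])) => [|m].
  by apply: ispoly_meval => i; rewrite /zj; case: eqP => _; [exact: ispoly_id | exact: ispoly_cst].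
apply: IHk => i ki; rewrite /zj; case: eqP => [_|ne]; first by exists m.
apply: zk; suff : (i : nat) != k by lia.
by apply/eqP => ik; apply: ne; apply: val_inj.
Qed.
End PolynomialFunctions.

Section QuaternionRotation.
Variable F : comPzRingType.
Implicit Types (a b c : F) (y : 'cV[F]_3).

Definition mx33 (a00 a01 a02 a10 a11 a12 a20 a21 a22 : F) : 'M[F]_3 :=
  \matrix_(i, j) match nat_of_ord i, nat_of_ord j with
   | 0, 0 => a00 | 0, 1 => a01 | 0, _ => a02
   | 1, 0 => a10 | 1, 1 => a11 | 1, _ => a12
   | _, 0 => a20 | _, 1 => a21 | _, _ => a22 end.

Lemma det_mx33 a00 a01 a02 a10 a11 a12 a20 a21 a22 :
  \det (mx33 a00 a01 a02 a10 a11 a12 a20 a21 a22) =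
  a00 * (a11 * a22 - a12 * a21) - a01 * (a10 * a22 - a12 * a20)
  + a02 * (a10 * a21 - a11 * a20).
Proof.
rewrite (expand_det_row _ ord0) !big_ord_recr big_ord0 /= /cofactor.
rewrite !(expand_det_row _ ord0) !big_ord_recr big_ord0 /= /cofactor.
by rewrite !det_mx11 !mxE /= !big_ord0 !add0n; ring.
Qed.

Definition quat_norm (q0 a b c : F) := q0 ^+ 2 + a ^+ 2 + b ^+ 2 + c ^+ 2.

(* Euler-Rodrigues: the rotation attached to the quaternion q0 + a i + b j + c k,
   scaled by its squared norm. *)
Definition quat_rot (q0 a b c : F) : 'M[F]_3 :=
  let s := q0 ^+ 2 - (a ^+ 2 + b ^+ 2 + c ^+ 2) in
  mx33 (s + 2 * a ^+ 2) (2 * a * b - 2 * q0 * c) (2 * a * c + 2 * q0 * b)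
       (2 * a * b + 2 * q0 * c) (s + 2 * b ^+ 2) (2 * b * c - 2 * q0 * a)
       (2 * a * c - 2 * q0 * b) (2 * b * c + 2 * q0 * a) (s + 2 * c ^+ 2).

Lemma quat_rotTM (q0 a b c : F) :
  (quat_rot q0 a b c)^T *m quat_rot q0 a b c = (quat_norm q0 a b c ^+ 2)%:M.
Proof.
apply/matrixP => i j; rewrite !mxE !big_ord_recr big_ord0 /= !mxE /=.
by case: i => [[|[|[|?]]] ?]; case: j => [[|[|[|?]]] ?] //=; rewrite /quat_norm; ring.
Qed.

Lemma det_quat_rot (q0 a b c : F) : \det (quat_rot q0 a b c) = quat_norm q0 a b c ^+ 3.
Proof. by rewrite /quat_rot det_mx33 /quat_norm; ring. Qed.

Lemma quat_rot0_trmx a b c y :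
  (quat_rot 0 a b c)^T *m y =
  (2 * bil (col3 a b c) y) *: col3 a b c - (a ^+ 2 + b ^+ 2 + c ^+ 2) *: y.
Proof.
apply/matrixP => i j; rewrite [j]ord1 [y]col3E !mxE !bilE !big_ord_recr big_ord0 /= !mxE /=.
by case: i => [[|[|[|?]]] ?] //=; ring.
Qed.

Definition isometry_coords (inv : bool) (M : 'M[F]_3) y : 'I_17 -> F :=
  if inv then mkpoint 1 M^T y (- (M^T *m y)) (bil y y)
  else mkpoint 1 M (- (M^T *m y)) y (bil y y).

(* At a real quaternion with N := quat_norm q0 a b c != 0 this is N^2 times the point
   of the isometry u |-> (Q u + y) / N, Q := quat_rot q0 a b c, or of its inverse. *)
Definition quat_fam (inv : bool) (q0 a b c : F) y : 'I_17 -> F :=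
  let N := quat_norm q0 a b c in let Q := quat_rot q0 a b c in
  if inv then mkpoint (N ^+ 2) (N *: Q^T) (N *: y) (- (Q^T *m y)) (bil y y)
  else mkpoint (N ^+ 2) (N *: Q) (- (Q^T *m y)) (N *: y) (bil y y).

Lemma quat_fam_isotropic inv (x y : 'cV[F]_3) : bil x x = 0 ->
  quat_fam inv 0 (x 0 0) (x 1 0) (x 2 0) y =1
  if inv then mkpoint 0 0 0 (- (2 * bil x y) *: x) (bil y y)
  else mkpoint 0 0 (- (2 * bil x y) *: x) 0 (bil y y).
Proof.
move=> xx k.
have x2 : x 0 0 ^+ 2 + x 1 0 ^+ 2 + x 2 0 ^+ 2 = 0 by rewrite -xx bilE; ring.
have N0 : quat_norm 0 (x 0 0) (x 1 0) (x 2 0) = 0 by rewrite /quat_norm -[RHS]x2; ring.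
rewrite /quat_fam N0 quat_rot0_trmx x2 -col3E !scale0r subr0 expr0n scaleNr.
by case: inv.
Qed.
End QuaternionRotation.

Section QuaternionRotationMap.
Variables (F G : comPzRingType) (f : {rmorphism F -> G}).

Lemma map_col3 a b c : map_mx f (col3 a b c) = col3 (f a) (f b) (f c).
Proof. by apply/matrixP => i j; rewrite !mxE; case: i => [[|[|[|?]]] ?]. Qed.

Lemma map_quat_rot q0 a b c :
  map_mx f (quat_rot q0 a b c) = quat_rot (f q0) (f a) (f b) (f c).
Proof.
apply/matrixP => i j; rewrite !mxE.
by case: i => [[|[|[|?]]] ?]; case: j => [[|[|[|?]]] ?] //=;
  rewrite ?(rmorphD, rmorphN, rmorphM, rmorphXn, rmorph_nat, rmorph1); ring.
Qed.

Lemma quat_fam_map inv q0 a b c y k :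
  f (quat_fam inv q0 a b c y k) = quat_fam inv (f q0) (f a) (f b) (f c) (map_mx f y) k.
Proof.
have fN : f (quat_norm q0 a b c) = quat_norm (f q0) (f a) (f b) (f c).
  by rewrite /quat_norm !(rmorphD, rmorphXn).
by rewrite /quat_fam; case: inv; rewrite (mkpoint_map f) map_bil !map_mxZ ?map_mxN
  ?map_mxM -?map_trmx map_quat_rot rmorphXn fN.
Qed.
End QuaternionRotationMap.

Local Notation o k := (@Ordinal 7 k isT).

Definition quat_fam7 (F : comPzRingType) (inv : bool) (z : 'I_7 -> F) : 'I_17 -> F :=
  quat_fam inv (z (o 0)) (z (o 1)) (z (o 2)) (z (o 3)) (col3 (z (o 4)) (z (o 5)) (z (o 6))).

Section QuaternionFamilyMap.
Variables (F G : comPzRingType) (f : {rmorphism F -> G}).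

Lemma quat_fam7_map inv z k :
  f (quat_fam7 inv z k) = quat_fam7 inv (fun i => f (z i)) k.
Proof. by rewrite /quat_fam7 quat_fam_map map_col3. Qed.

Lemma isometry_coords_map inv M t k :
  f (isometry_coords inv M t k) = isometry_coords inv (map_mx f M) (map_mx f t) k.
Proof.
by rewrite /isometry_coords; case: inv; rewrite (mkpoint_map f) map_bil ?map_mxN ?map_mxM
  -?map_trmx rmorph1.
Qed.
End QuaternionFamilyMap.

Section RealQuaternionFamily.
Variable R : realFieldType.
Variables (q0 a b c : R) (y : 'cV[R]_3).
Let N := quat_norm q0 a b c.
Let M := N^-1 *: quat_rot q0 a b c.
Hypothesis N0 : N != 0.

Lemma quat_rot_normalized : M^T *m M = 1%:M /\ \det M = 1.
Proof.
rewrite /M !linearZ /= -scalemxAl scalerA quat_rotTM scale_scalar_mx.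
rewrite detZ det_quat_rot -/N; split; first by congr (_%:M); field.
by field.
Qed.

Lemma quat_fam_isometry_coords inv :
  quat_fam inv q0 a b c y =1 (fun k => N ^+ 2 * isometry_coords inv M (N^-1 *: y) k).
Proof.
move=> k; rewrite /quat_fam /isometry_coords /M -/N.
set Q := quat_rot q0 a b c.
have QT : (N^-1 *: Q)^T = N^-1 *: Q^T by rewrite linearZ.
have QyE : (N^-1 *: Q)^T *m (N^-1 *: y) = (N^-1 * N^-1) *: (Q^T *m y).
  by rewrite QT -scalemxAr -scalemxAl scalerA.
have N2 : N ^+ 2 * (N^-1 * N^-1) = 1 by field.
have N1 : N ^+ 2 * N^-1 = N by field.
have Nyy : N ^+ 2 * (N^-1 * (N^-1 * bil y y)) = bil y y by field.
by case: inv; rewrite mkpoint_scale QyE ?QT bilZl bilZr !scalerN !scalerA N2 N1 Nyy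
  scale1r mulr1.
Qed.
End RealQuaternionFamily.

Section FamilyInX.
Variable R : realType.
Local Notation C := R[i].

Lemma isometry_point_isometry_coords inv (M : 'M[R]_3) (t : 'cV[R]_3) :
  M^T *m M = 1%:M -> \det M = 1 ->
  isometry_point (isometry_coords inv (map_mx (@cplx R) M) (cvec t)).
Proof.
move=> MM dM; have MMT : M *m M^T = 1%:M by apply: mulmx1C.
have bilMT u : bil (- (M^T *m u)) (- (M^T *m u)) = bil u u.
  by rewrite bilNl bilC bilNl opprK bil_mulmx trmxK MMT mul1mx.
rewrite /isometry_coords; case: inv.
  exists M^T, (- (M^T *m t)); rewrite trmxK det_tr mulmxN opprK mulmxA MMT mul1mx.
  rewrite hc_mkpoint Mc_mkpoint xc_mkpoint yc_mkpoint rc_mkpoint bil_cvec bilMT.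
  by rewrite map_cplx_trmx cvecN cvec_mulmx map_cplx_trmx.
exists M, t; rewrite hc_mkpoint Mc_mkpoint xc_mkpoint yc_mkpoint rc_mkpoint bil_cvec.
by rewrite cvecN cvec_mulmx map_cplx_trmx.
Qed.

Variables (p : {mpoly C[17]}) (d : nat).
Hypothesis p_hom : forall m, m \in msupp p -> mdeg m = d.
Hypothesis p_iso : forall w, isometry_point w -> p.@[w] = 0.

Lemma quat_fam7_real_vanish inv (z : 'I_7 -> R) :
  quat_norm (z (o 0)) (z (o 1)) (z (o 2)) (z (o 3)) != 0 ->
  p.@[quat_fam7 inv (fun i => cplx (z i))] = 0.
Proof.
set N := quat_norm _ _ _ _ => N0.
set M := N^-1 *: quat_rot (z (o 0)) (z (o 1)) (z (o 2)) (z (o 3)).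
set t := N^-1 *: col3 (z (o 4)) (z (o 5)) (z (o 6)).
have [MM dM] := quat_rot_normalized N0.
rewrite (@meval_eq _ _ _ (fun k => cplx (N ^+ 2) * isometry_coords inv (map_mx (@cplx R) M) (cvec t) k)).
  by rewrite (meval_scale_homog p_hom) p_iso ?mulr0 //; exact: isometry_point_isometry_coords.
move=> k; rewrite /cplx -quat_fam7_map /quat_fam7 (quat_fam_isometry_coords _ N0).
by rewrite rmorphM isometry_coords_map.
Qed.

Lemma quat_fam7_vanish inv (z : 'I_7 -> C) : p.@[quat_fam7 inv z] = 0.
Proof.
pose P := p \mPo [tuple quat_fam7 inv (fun i => 'X_i : {mpoly C[7]}) k | k < 17].
have PE w : P.@[w] = p.@[quat_fam7 inv w].
  rewrite comp_mpoly_meval; apply: meval_eq => k.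
  by rewrite tnth_mktuple (quat_fam7_map (meval w)) /quat_fam7 /= !mevalXU.
rewrite -PE; apply: meval_eq0_of_grid => m; rewrite PE.
rewrite (@meval_eq _ _ _ (quat_fam7 inv (fun i => cplx (m i).+1%:R))); last first.
  by move=> k; rewrite /quat_fam7 /cplx !rmorph_nat.
apply: quat_fam7_real_vanish; rewrite /quat_norm lt0r_neq0 // !ltr_wpDr ?sqr_ge0 //.
by rewrite exprn_gt0 // ltr0Sn.
Qed.

Lemma quat_fam_vanish inv (q0 a b c : C) (y : 'cV[C]_3) :
  p.@[quat_fam inv q0 a b c y] = 0.
Proof.
have := quat_fam7_vanish inv (fun i => nth 0 [:: q0; a; b; c; y 0 0; y 1 0; y 2 0] i).
by rewrite /quat_fam7 /= -col3E.
Qed.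
End FamilyInX.

Lemma isotropic_point_in_X (R : realType) inv (x : 'cV[R[i]]_3) (r : R[i]) :
  bil x x = 0 -> bil x (conjv x) != 0 ->
  in_X (if inv then mkpoint 0 0 0 x r else mkpoint 0 0 x 0 r).
Proof.
set s := bil x (conjv x) => xx s0.
have x0 : x != 0 by apply: contraNneq s0 => x0; rewrite /s x0 bil0l.
split.
  by apply: exists_coord_neq0; case: inv; rewrite ?xc_mkpoint ?yc_mkpoint; [right|left].
move=> p [d p_hom] p_iso.
(* This translation makes the family at the quaternion 0 + x equal to -2s times the point. *)
set y := conjv x - r *: x.
have cc : bil (conjv x) (conjv x) = 0 by rewrite /conjv -(map_bil conjc) xx rmorph0.
have xy : bil x y = s by rewrite bilC bilBl bilZl bilC xx mulr0 subr0.
have cy : bil (conjv x) y = - (r * s) by rewrite bilC bilBl bilZl cc sub0r.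
have yy : bil y y = - (2 * s) * r by rewrite {1}/y bilBl bilZl cy xy; ring.
have := quat_fam_vanish p_hom p_iso inv 0 (x 0 0) (x 1 0) (x 2 0) y.
rewrite (meval_eq _ (quat_fam_isotropic inv y xx)) xy yy.
set k0 := - (2 * s); have k00 : k0 != 0 by rewrite oppr_eq0 mulf_eq0 pnatr_eq0.
have scaled : (if inv then mkpoint 0 0 0 (k0 *: x) (k0 * r) else mkpoint 0 0 (k0 *: x) 0 (k0 * r))
  =1 (fun k => k0 * (if inv then mkpoint 0 0 0 x r else mkpoint 0 0 x 0 r) k).
  by move=> k; case: inv; rewrite mkpoint_scale mulr0 !scaler0.
rewrite (meval_eq _ scaled) (meval_scale_homog p_hom) => /eqP.
by rewrite mulf_eq0 expf_eq0 (negbTE k00) andbF => /eqP.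
Qed.

Section CollinearityBonds.
Variables (R : realType) (n : nat) (p P : 'I_n -> 'cV[R]_3) (d : 'I_n -> R).

Lemma lform_at_infinity i (v : 'I_17 -> R[i]) : hc v = 0 -> Mc v = 0 ->
  lform (p i) (P i) (d i) v = 0 <->
  bil (cvec (p i)) (xc v) + bil (yc v) (cvec (P i)) = rc v / 2.
Proof.
move=> h0 M0; rewrite /lform h0 M0 mul0mx bil0l !mulr0 subr0 !add0r -addrA -opprD -mulrDr.
split => [/eqP|->]; last by field.
by rewrite subr_eq0 => /eqP ->; field.
Qed.

Lemma collinearity_bondE (v : 'I_17 -> R[i]) :
  collinearity_bond p P d v <->
  [/\ in_X v, hc v = 0, Mc v = 0, (xc v == 0) != (yc v == 0) &
      forall i, bil (cvec (p i)) (xc v) + bil (yc v) (cvec (P i)) = rc v / 2].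
Proof.
split => [[[[vX vl] [_ h0]] [_ [M0 xy]]]|[vX h0 M0 xy vl]].
  by split => // i; apply/lform_at_infinity.
have vB : in_B v by [].
have vK : in_K p P d v by split => // i; apply/lform_at_infinity.
by [].
Qed.

Lemma collinear_of_collinearity_bond v :
  collinearity_bond p P d v -> collinear p \/ collinear P.
Proof.
case/collinearity_bondE => vX h0 _ xy vl.
have [xx yy] := in_X_isotropic vX; rewrite h0 mul0r in xx yy.
have [y0|y0] := eqVneq (yc v) 0.
  left; apply: (collinear_of_isotropic (c := rc v / 2) xx) => [|i].
    by move: xy; rewrite y0 eqxx; case: (xc v == 0).
  by rewrite -(vl i) y0 bil0l addr0.
have x0 : xc v = 0 by apply/eqP; move: xy; rewrite (negbTE y0); case: (xc v == 0).
right; apply: (collinear_of_isotropic (c := rc v / 2) yy y0) => i.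
by rewrite -(vl i) x0 bil0r add0r bilC.
Qed.

Lemma collinearity_bond_of_collinear :
  collinear p \/ collinear P -> exists v, collinearity_bond p P d v.
Proof.
case=> /isotropic_of_collinear [x [c [xx xs xq]]];
  have x0 : x != 0 by apply: contraNneq xs => ->; rewrite bil0l.
  exists (mkpoint 0 0 x 0 (2 * c)); apply/collinearity_bondE.
  rewrite hc_mkpoint Mc_mkpoint xc_mkpoint yc_mkpoint rc_mkpoint eqxx (negbTE x0).
  split => // [|i]; first exact: (isotropic_point_in_X false).
  by rewrite xq bil0l addr0; field.
exists (mkpoint 0 0 0 x (2 * c)); apply/collinearity_bondE.
rewrite hc_mkpoint Mc_mkpoint xc_mkpoint yc_mkpoint rc_mkpoint eqxx (negbTE x0).
split => // [|i]; first exact: (isotropic_point_in_X true).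
by rewrite bil0r add0r bilC xq; field.
Qed.
End CollinearityBonds.

Theorem mainTheorem7 (R : realType) (n : nat)
  (p P : 'I_n -> 'cV[R]_3) (d : 'I_n -> R) (hd : forall i, 0 <= d i) :
  (exists v : 'I_17 -> R[i], collinearity_bond p P d v) <->
  (collinear p \/ collinear P).
Proof.
split; last exact: collinearity_bond_of_collinear.
by case=> v /collinear_of_collinearity_bond.
Qed.
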